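(* Let $\mathbb{P}$ be a class of closed formulas that is closed under conjunction. Then every safety problem provable in $\mathbf{FI}^{\mathbb{P}}$ is provable in $\mathbf{F}^{\mathbb{P}}$.
   Context: A first-order vocabulary $\Sigma$ consists of constant, function and relation symbols; $\Sigma'=\{a' : a\in\Sigma\}$ is a disjoint copy, and for a formula $\varphi$ over $\Sigma$, $\varphi'$ denotes $\varphi$ with every symbol replaced by its primed copy. A safety problem is a triple $(\iota,\tau,\beta)$, where $\iota,\beta$ are closed formulas over $\Sigma$ and $\tau$ is a closed formula over $\Sigma\uplus\Sigma'$. $A\Rightarrow B$ means the implication $A\to B$ is valid. Proofs: a proof of $\Pi$ in a system is a finite tree whose nodes are safety problems, whose root is $\Pi$, and in which each node together with its children is an instance of one of the system's inference rules, with side conditions valid. Rules ($\varphi$ ranges over closed formulas over $\Sigma$): (Ind): no premises; conclusion $(\iota,\tau,\neg\varphi)$; side conditions $\iota\Rightarrow\varphi$ and $\varphi\wedge\tau\Rightarrow\varphi'$. (Cons): premise $(\iota,\tau,\neg\varphi)$; conclusion $(\iota,\tau,\beta)$; side condition $\varphi\Rightarrow\neg\beta$. (Inc): premises $(\iota,\tau,\neg\varphi)$ and $(\iota\wedge\varphi,\ \tau\wedge\varphi\wedge\varphi',\ \beta\wedge\varphi)$; conclusion $(\iota,\tau,\beta)$. $\mathbf{F}$ consists of (Ind) and (Cons); $\mathbf{FI}$ consists of (Ind), (Cons), (Inc). For a class of closed formulas $\mathbb{P}$, $\mathbf{F}^{\mathbb{P}}$ and $\mathbf{FI}^{\mathbb{P}}$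 restrict applications of (Ind) to $\varphi\in\mathbb{P}$. *)

From Stdlib Require Import List Arith.
Import ListNotations.
Set Implicit Arguments.

(* A vocabulary: function symbols (constants = arity 0) and relation symbols. *)
Record vocab := Vocab {
  fsym : Type;
  rsym : Type;
  far  : fsym -> nat;
  rar  : rsym -> nat }.

(* Sigma (+) Sigma' : inl = unprimed symbol a, inr = primed copy a'. *)
Definition dup (S : vocab) : vocab :=
  {| fsym := fsym S + fsym S; rsym := rsym S + rsym S;
     far := fun f => match f with inl g | inr g => far S g end;
     rar := fun r => match r with inl g | inr g => rar S g end |}.

Inductive term (S : vocab) : Type :=
| Var : nat -> term S
| App : fsym S -> list (term S) -> term S.

Inductive form (S : vocab) : Type :=
| FFalse : form S
| FTrue  : form S
| Atom   : rsym S -> list (term S) -> form S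
| Eq     : term S -> term S -> form S
| Not    : form S -> form S
| And    : form S -> form S -> form S
| Or     : form S -> form S -> form S
| Imp    : form S -> form S -> form S
| All    : nat -> form S -> form S
| Ex     : nat -> form S -> form S.

Arguments Var {S}. Arguments FFalse {S}. Arguments FTrue {S}.

Fixpoint term_wf S (t : term S) : Prop :=
  match t with
  | Var _ => True
  | App f ts => length ts = far S f /\
      (fix all (l : list (term S)) : Prop :=
         match l with nil => True | u :: l' => term_wf u /\ all l' end) ts
  end.

Fixpoint form_wf S (p : form S) : Prop :=
  match p with
  | FFalse | FTrue => True
  | Atom r ts => length ts = rar S r /\ Forall (@term_wf S) ts
  | Eq t u => term_wf t /\ term_wf u
  | Not a => form_wf a
  | And a b | Or a b | Imp a b => form_wf a /\ form_wf b
  | All _ a | Ex _ a => form_wf a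
  end.

Fixpoint term_fv S (t : term S) : list nat :=
  match t with
  | Var x => [x]
  | App _ ts => (fix fvs (l : list (term S)) : list nat :=
                   match l with nil => nil | u :: l' => term_fv u ++ fvs l' end) ts
  end.

Fixpoint form_fv S (p : form S) : list nat :=
  match p with
  | FFalse | FTrue => nil
  | Atom _ ts => flat_map (@term_fv S) ts
  | Eq t u => term_fv t ++ term_fv u
  | Not a => form_fv a
  | And a b | Or a b | Imp a b => form_fv a ++ form_fv b
  | All x a | Ex x a => remove Nat.eq_dec x (form_fv a)
  end.

Definition closed_form S (p : form S) : Prop := form_wf p /\ form_fv p = nil.

(* Semantics (Tarskian, arbitrary domains; nonemptiness is forced by the
   quantification over assignments). *)
Record structure (S : vocab) (D : Type) := Struct {
  ifun : fsym S -> list D -> D;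
  irel : rsym S -> list D -> Prop }.

Definition upd D (rho : nat -> D) (x : nat) (d : D) : nat -> D :=
  fun y => if Nat.eqb y x then d else rho y.

Fixpoint teval S D (M : structure S D) (rho : nat -> D) (t : term S) : D :=
  match t with
  | Var x => rho x
  | App f ts => ifun M f ((fix ev (l : list (term S)) : list D :=
                   match l with nil => nil | u :: l' => teval M rho u :: ev l' end) ts)
  end.

Fixpoint sat S D (M : structure S D) (rho : nat -> D) (p : form S) : Prop :=
  match p with
  | FFalse => False
  | FTrue => True
  | Atom r ts => irel M r (map (teval M rho) ts)
  | Eq t u => teval M rho t = teval M rho u
  | Not a => ~ sat M rho a
  | And a b => sat M rho a /\ sat M rho b
  | Or a b => sat M rho a \/ sat M rho b
  | Imp a b => sat M rho a -> sat M rho b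
  | All x a => forall d : D, sat M (upd rho x d) a
  | Ex x a => exists d : D, sat M (upd rho x d) a
  end.

Definition valid S (p : form S) : Prop :=
  forall (D : Type) (M : structure S D) (rho : nat -> D), sat M rho p.

Definition entails S (a b : form S) : Prop := valid (Imp a b).

Fixpoint term_ren S S' (f : fsym S -> fsym S') (t : term S) : term S' :=
  match t with
  | Var x => Var x
  | App g ts => App (f g) ((fix rn (l : list (term S)) : list (term S') :=
                   match l with nil => nil | u :: l' => @term_ren S S' f u :: rn l' end) ts)
  end.

Fixpoint form_ren S S' (f : fsym S -> fsym S') (g : rsym S -> rsym S')
         (p : form S) : form S' :=
  match p with
  | FFalse => FFalse
  | FTrue => FTrue
  | Atom r ts => Atom (g r) (map (@term_ren S S' f) ts)
  | Eq t u => Eq (@term_ren S S' f t) (@term_ren S S' f u)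
  | Not a => Not (@form_ren S S' f g a)
  | And a b => And (@form_ren S S' f g a) (@form_ren S S' f g b)
  | Or a b => Or (@form_ren S S' f g a) (@form_ren S S' f g b)
  | Imp a b => Imp (@form_ren S S' f g a) (@form_ren S S' f g b)
  | All x a => All x (@form_ren S S' f g a)
  | Ex x a => Ex x (@form_ren S S' f g a)
  end.

Definition unprimed S (p : form S) : form (dup S) :=
  @form_ren S (dup S) inl inl p.
Definition primed S (p : form S) : form (dup S) :=
  @form_ren S (dup S) inr inr p.

Record problem (S : vocab) := Problem {
  init  : form S;
  trans : form (dup S);
  bad   : form S }.

Definition safety_problem S (Pi : problem S) : Prop :=
  closed_form (init Pi) /\ closed_form (trans Pi) /\ closed_form (bad Pi).

(* Provability (finite proof trees, as an inductive derivability relation).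
   [withInc = false] gives F^P, [withInc = true] gives FI^P; applications of
   (Ind) are restricted to phi in P. *)
Inductive provable S (P : form S -> Prop) (withInc : bool) : problem S -> Prop :=
| rule_Ind : forall (iota : form S) (tau : form (dup S)) (phi : form S),
    closed_form phi -> P phi ->
    entails iota phi ->
    entails (And (unprimed phi) tau) (primed phi) ->
    provable P withInc (Problem iota tau (Not phi))
| rule_Cons : forall (iota : form S) (tau : form (dup S)) (beta phi : form S),
    closed_form phi ->
    provable P withInc (Problem iota tau (Not phi)) ->
    entails phi (Not beta) ->
    provable P withInc (Problem iota tau beta)
| rule_Inc : forall (iota : form S) (tau : form (dup S)) (beta phi : form S),
    withInc = true ->
    closed_form phi ->
    provable P withInc (Problem iota tau (Not phi)) ->
    provable P withInc
      (Problem (And iota phi) (And tau (And (unprimed phi) (primed phi)))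
               (And beta phi)) ->
    provable P withInc (Problem iota tau beta).

Definition provable_F S (P : form S -> Prop) := provable P false.
Definition provable_FI S (P : form S -> Prop) := provable P true.

(* Every FI^P proof yields a single safe inductive invariant in P: an (Ind)
   leaf is its own invariant, (Cons) keeps the invariant of its premise, and
   for (Inc) the conjunction psi1 /\ psi2 of the premises' invariants works,
   because psi1 implies the lemma phi in both the current and the next state,
   which is exactly what the strengthened transition relation of the second
   premise assumes. Closure of P under conjunction keeps the invariant in P,
   and one (Ind) followed by one (Cons) is then an F^P proof. *)
From Stdlib Require Import List Classical.
Set Implicit Arguments.

Section Renaming.

Variables (S S' : vocab) (f : fsym S -> fsym S') (g : rsym S -> rsym S').

Definition reduct D (M : structure S' D) : structure S D :=
  @Struct S D (fun h => ifun M (f h)) (fun r => irel M (g r)).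

Fixpoint teval_term_ren D (M : structure S' D) rho (t : term S) {struct t} :
  teval M rho (@term_ren S S' f t) = teval (reduct M) rho t.
Proof.
  destruct t as [x | h ts]; simpl; [reflexivity |].
  f_equal; revert ts; fix teval_list 1.
  intros [| u ts]; simpl; [reflexivity |].
  f_equal; [apply teval_term_ren | apply teval_list].
Qed.

Lemma sat_form_ren D (M : structure S' D) (p : form S) rho :
  sat M rho (@form_ren S S' f g p) <-> sat (reduct M) rho p.
Proof.
  revert rho; induction p; intros rho; simpl; try tauto.
  - rewrite map_map; erewrite map_ext; [reflexivity |].
    intro; apply teval_term_ren.
  - rewrite !teval_term_ren; tauto.
  - rewrite IHp; tauto.
  - rewrite IHp1, IHp2; tauto.
  - rewrite IHp1, IHp2; tauto.
  - rewrite IHp1, IHp2; tauto.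
  - split; intros H d; apply IHp, H.
  - split; intros [d H]; exists d; apply IHp, H.
Qed.

Lemma entails_form_ren (a b : form S) :
  entails a b -> entails (@form_ren S S' f g a) (@form_ren S S' f g b).
Proof.
  intros Hab D M rho Ha; simpl in *.
  apply sat_form_ren, Hab, sat_form_ren, Ha.
Qed.

End Renaming.

Lemma entails_notnot S (a b : form S) :
  entails a (Not (Not b)) -> entails a b.
Proof.
  intros Hab D M rho Ha; simpl in *.
  apply NNPP, (Hab D M rho Ha).
Qed.

Definition safe_inductive_invariant S (P : form S -> Prop) (Pi : problem S)
  (psi : form S) : Prop :=
  P psi /\ entails (init Pi) psi /\
  entails (And (unprimed psi) (trans Pi)) (primed psi) /\
  entails psi (Not (bad Pi)).

Section Invariants.

Variables (S : vocab) (P : form S -> Prop).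

Lemma safe_inductive_invariant_Inc (iota : form S) (tau : form (dup S))
    (beta phi psi1 psi2 : form S) :
  (forall a b, P a -> P b -> P (And a b)) ->
  safe_inductive_invariant P (Problem iota tau (Not phi)) psi1 ->
  safe_inductive_invariant P
    (Problem (And iota phi) (And tau (And (unprimed phi) (primed phi)))
             (And beta phi)) psi2 ->
  safe_inductive_invariant P (Problem iota tau beta) (And psi1 psi2).
Proof.
  intros HPconj [HP1 [Hinit1 [Hstep1 Hsafe1]]] [HP2 [Hinit2 [Hstep2 Hsafe2]]].
  simpl in *.
  assert (Hphi : entails psi1 phi) by exact (entails_notnot Hsafe1).
  assert (Hphi_cur : entails (unprimed psi1) (unprimed phi))
    by exact (@entails_form_ren S (dup S) inl inl _ _ Hphi).
  assert (Hphi_next : entails (primed psi1) (primed phi))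
    by exact (@entails_form_ren S (dup S) inr inr _ _ Hphi).
  split; [apply HPconj; assumption |].
  split; [| split]; intros D M rho; simpl.
  - intros Hiota.
    assert (Hpsi1 : sat M rho psi1) by exact (Hinit1 D M rho Hiota).
    split; [exact Hpsi1 |].
    apply (Hinit2 D M rho); simpl; split; [exact Hiota | exact (Hphi D M rho Hpsi1)].
  - intros [[Hcur1 Hcur2] Htau].
    assert (Hnext1 : sat M rho (primed psi1)) by (apply (Hstep1 D M rho); simpl; auto).
    split; [exact Hnext1 |].
    apply (Hstep2 D M rho); simpl.
    split; [exact Hcur2 |].
    split; [exact Htau |].
    split; [exact (Hphi_cur D M rho Hcur1) | exact (Hphi_next D M rho Hnext1)].
  - intros [Hpsi1 Hpsi2] Hbeta.
    apply (Hsafe2 D M rho Hpsi2); simpl.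
    split; [exact Hbeta | exact (Hphi D M rho Hpsi1)].
Qed.

Lemma provable_safe_inductive_invariant (withInc : bool) (Pi : problem S) :
  (forall a b, P a -> P b -> P (And a b)) ->
  provable P withInc Pi -> exists psi, safe_inductive_invariant P Pi psi.
Proof.
  intros HPconj Hprov.
  induction Hprov as [iota tau phi _ HP Hinit Hstep
                     | iota tau beta phi _ _ [psi [HP [Hinit [Hstep Hsafe]]]] Hcons
                     | iota tau beta phi _ _ _ [psi1 Hinv1] _ [psi2 Hinv2]].
  - exists phi; repeat split; try assumption.
    intros D M rho Hphi Hnot; exact (Hnot Hphi).
  - exists psi; repeat split; try assumption.
    intros D M rho Hpsi Hbeta; simpl in *.
    apply (Hsafe D M rho Hpsi); intro Hphi; exact (Hcons D M rho Hphi Hbeta).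
  - exists (And psi1 psi2).
    exact (safe_inductive_invariant_Inc HPconj Hinv1 Hinv2).
Qed.

Lemma provable_F_of_safe_inductive_invariant (Pi : problem S) (psi : form S) :
  (forall phi, P phi -> closed_form phi) ->
  safe_inductive_invariant P Pi psi -> provable_F P Pi.
Proof.
  intros HPclosed [HP [Hinit [Hstep Hsafe]]].
  destruct Pi as [iota tau beta]; simpl in *.
  apply rule_Cons with psi; [apply HPclosed; exact HP | | exact Hsafe].
  apply rule_Ind; [apply HPclosed | | |]; assumption.
Qed.

End Invariants.

Theorem corollary4p8 (S : vocab) (P : form S -> Prop)
  (HPclosed : forall phi, P phi -> closed_form phi)
  (HPconj : forall phi psi, P phi -> P psi -> P (And phi psi))
  (Pi : problem S) :
  safety_problem Pi -> provable_FI P Pi -> provable_F P Pi.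
Proof.
  intros _ Hprov.
  destruct (provable_safe_inductive_invariant HPconj Hprov) as [psi Hinv].
  exact (provable_F_of_safe_inductive_invariant HPclosed Hinv).
Qed.
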